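(* Let $H\in\mathbb R^{T\times d_L}$, $X\in\mathbb R^{|V|\times d_R}$, $P\in\mathbb R^{n_P}$ (Frobenius/Euclidean inner products), let $\tau_{R\to L},\tau_{L\to R}\ge0$ be arbitrary finite delays, and consider the closed principal system \[ \dot H(t)=A_L(H(t))+\mathcal K X(t-\tau_{R\to L}),\quad \dot X(t)=A_R(X(t))+\mathcal K^* H(t-\tau_{L\to R}),\quad \dot P(t)=A_P(P(t)), \] where $\mathcal K:\mathbb R^{|V|\times d_R}\to\mathbb R^{T\times d_L}$ is a fixed linear operator with adjoint $\mathcal K^*$ and $\|\mathcal K\|_{\mathrm{op}}\le\|\mathcal K\|_{\mathrm{HS}}\le C_{\mathcal K}$, and $A_L,A_R,A_P$ are Lipschitz maps (the instantaneous principal vector fields, e.g. $A_L(H)=-\Delta_{G_L}(Q_L)H+F_L(H)$ and $A_R(X)=-\Delta_{G_R}(W_R)X+F_R(X)$ with all auxiliary variables frozen) which are one-sided dissipative: \[ \langle A_L(u)-A_L(v),u-v\rangle\le-\mu_L\|u-v\|^2,\ \langle A_R(u)-A_R(v),u-v\rangle\le-\mu_R\|u-v\|^2,\ \langle A_P(u)-A_P(v),u-v\rangle\le-\mu_P\|u-v\|^2 \] with $\mu_L,\mu_R,\mu_P>0$. Assume the system evolves in a compact positively invariant set (of the form of a product of closed balls) and has an equilibrium $(H^*,X^*,P^* )$ there, and assume the small-gain condition $C_{\mathcal K}^2<\mu_L\mu_R$. Then the equilibrium $(H^*,X^*,P^* )$ is unique and globally asymptotically stable, for all finite delays. Moreover,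 with $\tilde\varphi=(\tilde\varphi_L,\tilde\varphi_R,\tilde\varphi_P)$ denoting a history centered at the equilibrium, the Lyapunov–Krasovskii functional \[ V(\tilde\varphi)=\tfrac12\|\tilde\varphi_L(0)\|^2+\tfrac12\|\tilde\varphi_R(0)\|^2+\tfrac12\|\tilde\varphi_P(0)\|^2+\tfrac{C_{\mathcal K}^2}{2\mu_L}\int_{-\tau_{R\to L}}^0\|\tilde\varphi_R(s)\|^2ds+\tfrac{C_{\mathcal K}^2}{2\mu_R}\int_{-\tau_{L\to R}}^0\|\tilde\varphi_L(s)\|^2ds \] satisfies along solutions \[ \dot V\le-\alpha_L\|\tilde H(t)\|^2-\alpha_R\|\tilde X(t)\|^2-\mu_P\|\tilde P(t)\|^2, \] where $\tilde H=H-H^*$, $\tilde X=X-X^*$, $\tilde P=P-P^*$, $\alpha_L=\mu_L/2-C_{\mathcal K}^2/(2\mu_R)>0$ and $\alpha_R=\mu_R/2-C_{\mathcal K}^2/(2\mu_L)>0$.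
   Context: $H$ is a symbolic field on a connected finite graph $G_L$ with node set $\{1,\dots,T\}$ and $X$ a geometric field on a connected finite graph $G_R$ with node set $V$; $\Delta_{G_L}(Q_L)$, $\Delta_{G_R}(W_R)$ are weighted graph Laplacians with edge weights frozen at equilibrium values, and $F_L,F_R$ reaction terms. The operator $\mathcal K$ is induced by a kernel $\mathcal K(\ell,i)\in\mathbb R^{d_L\times d_R}$ via $(\mathcal K X)_\ell=\sum_i\mathcal K(\ell,i)x_i$, with $\|\mathcal K\|_{\mathrm{HS}}^2=\sum_{\ell,i}\|\mathcal K(\ell,i)\|_F^2$. Globally asymptotically stable means Lyapunov stable and every solution with admissible initial history converges to the equilibrium as $t\to\infty$. *)

From HB Require Import structures.
From mathcomp Require Import all_boot all_order all_algebra.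
From mathcomp Require Import all_classical all_reals all_analysis.
Set Implicit Arguments. Unset Strict Implicit. Unset Printing Implicit Defensive.
Import Order.TTheory GRing.Theory Num.Theory.
Import numFieldNormedType.Exports.
Local Open Scope classical_set_scope.
Local Open Scope ring_scope.

Section Defs.
Variable R : realType.

Definition frob (m n : nat) (A B : 'M[R]_(m, n)) : R :=
  \sum_(i < m) \sum_(j < n) A i j * B i j.
Definition fnorm2 (m n : nat) (A : 'M[R]_(m, n)) : R := frob A A.
Definition fnorm (m n : nat) (A : 'M[R]_(m, n)) : R := Num.sqrt (fnorm2 A).

(* The coupling operator K induced by a kernel Kk(l,i) in R^{dL x dR}:
   (K X)_l = sum_i Kk(l,i) x_i, x_i the i-th row of X (rows of K X are the
   vectors (K X)_l).  Its adjoint w.r.t. the Frobenius inner products: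
   (K^* H)_i = sum_l Kk(l,i)^T h_l. *)
Definition Kop (T dL nV dR : nat) (Kk : 'I_T -> 'I_nV -> 'M[R]_(dL, dR))
  (X : 'M[R]_(nV, dR)) : 'M[R]_(T, dL) :=
  \matrix_(l < T, a < dL) \sum_(i < nV) \sum_(b < dR) Kk l i a b * X i b.
Definition Kadj (T dL nV dR : nat) (Kk : 'I_T -> 'I_nV -> 'M[R]_(dL, dR))
  (H : 'M[R]_(T, dL)) : 'M[R]_(nV, dR) :=
  \matrix_(i < nV, b < dR) \sum_(l < T) \sum_(a < dL) Kk l i a b * H l a.
Definition HSnorm (T dL nV dR : nat) (Kk : 'I_T -> 'I_nV -> 'M[R]_(dL, dR)) : R :=
  Num.sqrt (\sum_(l < T) \sum_(i < nV) fnorm2 (Kk l i)).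

Definition lipschitz_map (m n : nat) (A : 'M[R]_(m, n) -> 'M[R]_(m, n)) : Prop :=
  exists Lc : R, forall u v, fnorm (A u - A v) <= Lc * fnorm (u - v).
Definition one_sided_dissipative (m n : nat) (A : 'M[R]_(m, n) -> 'M[R]_(m, n))
  (mu : R) : Prop :=
  forall u v, frob (A u - A v) (u - v) <= - mu * fnorm2 (u - v).

(* Classical solution of the delayed system on [-tau, +oo), tau = max delay:
   continuous on [-tau, +oo) (the restriction to [-tau,0] is the initial
   history), differentiable on (0, +oo) and satisfying the equations there. *)
Definition is_solution (T dL nV dR nP : nat)
  (AL : 'M[R]_(T, dL) -> 'M[R]_(T, dL)) (AR : 'M[R]_(nV, dR) -> 'M[R]_(nV, dR))
  (AP : 'cV[R]_nP -> 'cV[R]_nP) (Kk : 'I_T -> 'I_nV -> 'M[R]_(dL, dR))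
  (tauRL tauLR : R)
  (H : R -> 'M[R]_(T, dL)) (X : R -> 'M[R]_(nV, dR)) (P : R -> 'cV[R]_nP) : Prop :=
  let tau := Num.max tauRL tauLR in
  [/\ {within [set t | - tau <= t], continuous H},
      {within [set t | - tau <= t], continuous X},
      {within [set t | - tau <= t], continuous P} &
      forall t : R, 0 < t ->
        [/\ is_derive t (1 : R) H (AL (H t) + Kop Kk (X (t - tauRL))),
            is_derive t (1 : R) X (AR (X t) + Kadj Kk (H (t - tauLR))) &
            is_derive t (1 : R) P (AP (P t))]].

Definition dist3 (T dL nV dR nP : nat) (H Hs : 'M[R]_(T, dL))
  (X Xs : 'M[R]_(nV, dR)) (P Ps : 'cV[R]_nP) : R :=
  Num.sqrt (fnorm2 (H - Hs) + fnorm2 (X - Xs) + fnorm2 (P - Ps)).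

Definition in_balls (T dL nV dR nP : nat)
  (cL : 'M[R]_(T, dL)) (rL : R) (cR : 'M[R]_(nV, dR)) (rR : R)
  (cP : 'cV[R]_nP) (rP : R) H X P : Prop :=
  [/\ fnorm (H - cL) <= rL, fnorm (X - cR) <= rR & fnorm (P - cP) <= rP].

Definition LKfun (T dL nV dR nP : nat) (CK muL muR tauRL tauLR : R)
  (phL : R -> 'M[R]_(T, dL)) (phR : R -> 'M[R]_(nV, dR)) (phP : R -> 'cV[R]_nP) : R :=
  2^-1 * fnorm2 (phL 0) + 2^-1 * fnorm2 (phR 0) + 2^-1 * fnorm2 (phP 0)
  + CK ^+ 2 / (2 * muL) *
      Rintegral (@lebesgue_measure R) `[- tauRL, 0]%classic (fun s => fnorm2 (phR s))
  + CK ^+ 2 / (2 * muR) *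
      Rintegral (@lebesgue_measure R) `[- tauLR, 0]%classic (fun s => fnorm2 (phL s)).

End Defs.

(* Along a solution, the Lyapunov-Krasovskii functional V is differentiable and,
   by one-sided dissipativity and Young's inequality with weights CK^2/(2 mu), the
   delayed coupling terms are exactly absorbed by the derivatives of the two
   history integrals, leaving V' <= -alphaL |H~|^2 - alphaR |X~|^2 - muP |P~|^2;
   the small-gain condition is precisely alphaL, alphaR > 0.  The same estimate
   at rest gives uniqueness of the equilibrium.  Since |x~(t)|^2 / 2 <= V(t) and
   V is nonincreasing, |x~(t)|^2 is bounded by a multiple of the sup of the
   history: stability.  On the invariant balls the fields are bounded, so
   |x~|^2 has a derivative bounded below, and a Barbalat-type argument on the
   decreasing V turns the integrable dissipation into |x~(t)|^2 -> 0. *)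

From HB Require Import structures.
From mathcomp Require Import all_boot all_order all_algebra.
From mathcomp Require Import all_classical all_reals all_analysis.
From mathcomp Require Import ring lra.
Import Order.TTheory GRing.Theory Num.Theory.
Import numFieldNormedType.Exports.
Local Open Scope classical_set_scope.
Local Open Scope ring_scope.
Set Implicit Arguments. Unset Strict Implicit. Unset Printing Implicit Defensive.

Section Frobenius.
Variables (R : realType) (m n : nat).
Implicit Types A B C : 'M[R]_(m, n).

Lemma frobC A B : frob A B = frob B A.
Proof. by apply: eq_bigr => i _; apply: eq_bigr => j _; rewrite mulrC. Qed.

Lemma frobDl A B C : frob (A + B) C = frob A C + frob B C.
Proof.
rewrite /frob -big_split /=; apply: eq_bigr => i _; rewrite -big_split /=.
by apply: eq_bigr => j _; rewrite mxE mulrDl.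
Qed.

Lemma frobNl A B : frob (- A) B = - frob A B.
Proof.
rewrite /frob -sumrN; apply: eq_bigr => i _; rewrite -sumrN.
by apply: eq_bigr => j _; rewrite mxE mulNr.
Qed.

Lemma frob0l B : frob 0 B = 0.
Proof. by rewrite /frob big1 // => i _; rewrite big1 // => j _; rewrite mxE mul0r. Qed.

Lemma fnorm2E A : fnorm2 A = \sum_i \sum_j A i j ^+ 2.
Proof. by apply: eq_bigr => i _; apply: eq_bigr => j _; rewrite expr2. Qed.

Lemma fnorm2_ge0 A : 0 <= fnorm2 A.
Proof. by rewrite fnorm2E; apply: sumr_ge0 => i _; apply: sumr_ge0 => j _; exact: sqr_ge0. Qed.

Lemma fnorm2N A : fnorm2 (- A) = fnorm2 A.
Proof. by rewrite /fnorm2 frobNl frobC frobNl opprK. Qed.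

Lemma fnorm2_eq0 A : (fnorm2 A == 0) = (A == 0).
Proof.
apply/idP/eqP => [|->]; last by rewrite /fnorm2 frob0l.
rewrite fnorm2E psumr_eq0 => [/allP A0|i _]; last first.
  by apply: sumr_ge0 => j _; exact: sqr_ge0.
apply/matrixP => i j; have /implyP/(_ isT) := A0 i (mem_index_enum _).
rewrite psumr_eq0 => [/allP /(_ j (mem_index_enum _))|k _]; last exact: sqr_ge0.
by rewrite sqrf_eq0 mxE => /eqP.
Qed.

Lemma frob_young A B (c : R) : 0 < c ->
  frob A B <= (2 * c)^-1 * fnorm2 A + c / 2 * fnorm2 B.
Proof.
move=> c0; rewrite /fnorm2 /frob !mulr_sumr -big_split /=; apply: ler_sum => i _.
rewrite !mulr_sumr -big_split /=; apply: ler_sum => j _.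
rewrite -subr_ge0.
have -> : (2 * c)^-1 * (A i j * A i j) + c / 2 * (B i j * B i j) - A i j * B i j
          = (2 * c)^-1 * (A i j - c * B i j) ^+ 2 by field; rewrite gt_eqF.
by rewrite mulr_ge0 ?sqr_ge0 // invr_ge0 mulr_ge0 // ltW.
Qed.

Lemma frob_ge A B : - (fnorm2 A + fnorm2 B) <= 2 * frob A B.
Proof.
rewrite /fnorm2 /frob -big_split /= mulr_sumr -sumrN; apply: ler_sum => i _.
rewrite -big_split /= mulr_sumr -sumrN; apply: ler_sum => j _.
have := sqr_ge0 (A i j + B i j); rewrite expr2; nra.
Qed.

Lemma fnorm2D_le A B : fnorm2 (A + B) <= 2 * fnorm2 A + 2 * fnorm2 B.
Proof.
rewrite /fnorm2 /frob !mulr_sumr -big_split /=; apply: ler_sum => i _.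
rewrite !mulr_sumr -big_split /=; apply: ler_sum => j _; rewrite !mxE.
have := sqr_ge0 (A i j - B i j); rewrite expr2; nra.
Qed.

Lemma fnorm2_tr A : fnorm2 A^T = fnorm2 A.
Proof.
rewrite /fnorm2 /frob exchange_big /=.
by apply: eq_bigr => i _; apply: eq_bigr => j _; rewrite mxE.
Qed.

Lemma fnorm2_le_sqr A r : fnorm A <= r -> fnorm2 A <= r ^+ 2.
Proof.
move=> Ar; rewrite -(sqr_sqrtr (fnorm2_ge0 A)) ler_sqr ?nnegrE ?sqrtr_ge0 //.
exact: le_trans (sqrtr_ge0 _) Ar.
Qed.

Lemma fnorm2B_ball_le A B C r :
  fnorm (A - C) <= r -> fnorm (B - C) <= r -> fnorm2 (A - B) <= 4 * r ^+ 2.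
Proof.
move=> /fnorm2_le_sqr AC /fnorm2_le_sqr BC.
have -> : A - B = (A - C) + - (B - C) by rewrite opprB addrA subrK.
by apply: le_trans (fnorm2D_le _ _) _; rewrite fnorm2N; lra.
Qed.

Lemma fnorm2B_le0_eq A B : fnorm2 (A - B) <= 0 -> A = B.
Proof.
move=> AB_le0; apply/eqP; rewrite -subr_eq0 -fnorm2_eq0 eq_le AB_le0.
exact: fnorm2_ge0.
Qed.

Lemma lipschitz_map_fnorm2 (F : 'M[R]_(m, n) -> 'M[R]_(m, n)) :
  lipschitz_map F ->
  exists2 L : R, 0 <= L & forall u v, fnorm2 (F u - F v) <= L * fnorm2 (u - v).
Proof.
move=> [k Fk]; exists (k ^+ 2) => [|u v]; first exact: sqr_ge0.
have := Fk u v; rewrite /fnorm => le_uv.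
rewrite -(sqr_sqrtr (fnorm2_ge0 (F u - F v))).
rewrite -[X in _ * X](sqr_sqrtr (fnorm2_ge0 (u - v))).
by rewrite -exprMn ler_sqr ?nnegrE ?sqrtr_ge0 // (le_trans (sqrtr_ge0 _) le_uv).
Qed.

End Frobenius.

Lemma discriminant_le (R : realFieldType) (A B C : R) : 0 <= A ->
  (forall l, 2 * l * C <= l ^+ 2 * A + B) -> C ^+ 2 <= A * B.
Proof.
move=> A0 quad; have B0 : 0 <= B by have := quad 0; rewrite expr2 !mulr0 !mul0r add0r.
have [Apos|] := ltP 0 A.
  have := quad (C / A).
  have -> : 2 * (C / A) * C = 2 * (C ^+ 2 / A) by rewrite expr2; field; rewrite gt_eqF.
  have -> : (C / A) ^+ 2 * A = C ^+ 2 / A by rewrite expr2; field; rewrite gt_eqF.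
  by move=> ?; rewrite -ler_pdivrMl // mulrC; lra.
move=> A_le0; have A_eq0 : A = 0 by apply/eqP; rewrite eq_le A_le0 A0.
rewrite {}A_eq0 in quad *.
rewrite mul0r; have [->|C_neq0] := eqVneq C 0; first by rewrite expr0n.
have := quad ((B + 1) / (2 * C)).
have -> : 2 * ((B + 1) / (2 * C)) * C = B + 1 by field; rewrite C_neq0.
by rewrite mulr0 add0r; lra.
Qed.

Lemma sum_mul_sqr_le (R : realFieldType) (I : finType) (u v : I -> R) :
  (\sum_i u i * v i) ^+ 2 <= (\sum_i u i ^+ 2) * (\sum_i v i ^+ 2).
Proof.
apply: discriminant_le => [|l]; first by apply: sumr_ge0 => i _; exact: sqr_ge0.
rewrite !mulr_sumr -big_split /=; apply: ler_sum => i _.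
have := sqr_ge0 (l * u i - v i); rewrite !expr2; nra.
Qed.

Section Coupling.
Variables (R : realType) (T dL nV dR : nat) (Kk : 'I_T -> 'I_nV -> 'M[R]_(dL, dR)).

Lemma KopB (A B : 'M[R]_(nV, dR)) : Kop Kk (A - B) = Kop Kk A - Kop Kk B.
Proof.
apply/matrixP => l a; rewrite !mxE -sumrB; apply: eq_bigr => i _.
by rewrite -sumrB; apply: eq_bigr => b _; rewrite !mxE mulrBr.
Qed.

Lemma fnorm2_Kop_le_HSnorm (X : 'M[R]_(nV, dR)) :
  fnorm2 (Kop Kk X) <= HSnorm Kk ^+ 2 * fnorm2 X.
Proof.
rewrite sqr_sqrtr; last by do 2!(apply: sumr_ge0 => ? _); exact: fnorm2_ge0.
rewrite [fnorm2 (Kop _ _)]fnorm2E mulr_suml; apply: ler_sum => l _.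
under [X in _ <= X * _]eq_bigr do rewrite fnorm2E.
rewrite exchange_big mulr_suml; apply: ler_sum => a _.
by rewrite mxE fnorm2E !pair_big; exact: sum_mul_sqr_le.
Qed.

Definition Kadj_kernel : 'I_nV -> 'I_T -> 'M[R]_(dR, dL) := fun i l => (Kk l i)^T.

Lemma Kadj_Kop (H : 'M[R]_(T, dL)) : Kadj Kk H = Kop Kadj_kernel H.
Proof. by apply/matrixP => i b; rewrite !mxE; do 2!(apply: eq_bigr => ? _); rewrite mxE. Qed.

Lemma HSnorm_Kadj_kernel : HSnorm Kadj_kernel = HSnorm Kk.
Proof.
rewrite /HSnorm exchange_big /=; congr Num.sqrt.
by do 2!(apply: eq_bigr => ? _); rewrite fnorm2_tr.
Qed.

Lemma fnorm2_Kop_le (CK : R) (X : 'M[R]_(nV, dR)) :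
  HSnorm Kk <= CK -> fnorm2 (Kop Kk X) <= CK ^+ 2 * fnorm2 X.
Proof.
move=> Kk_le; apply: le_trans (fnorm2_Kop_le_HSnorm X) (ler_wpM2r (fnorm2_ge0 _) _).
by rewrite ler_sqr ?nnegrE ?sqrtr_ge0 // (le_trans (sqrtr_ge0 _) Kk_le).
Qed.

Lemma frob_Kop_le (CK mu : R) (X : 'M[R]_(nV, dR)) (H : 'M[R]_(T, dL)) :
  HSnorm Kk <= CK -> 0 < mu ->
  frob (Kop Kk X) H <= mu / 2 * fnorm2 H + CK ^+ 2 / (2 * mu) * fnorm2 X.
Proof.
move=> Kk_le mu0; apply: le_trans (frob_young _ _ mu0) _.
have := fnorm2_Kop_le X Kk_le.
have : 0 <= (2 * mu)^-1 by rewrite invr_ge0 mulr_ge0 // ltW.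
rewrite addrC mulrC; nra.
Qed.

End Coupling.

Lemma KadjB (R : realType) T dL nV dR (Kk : 'I_T -> 'I_nV -> 'M[R]_(dL, dR))
    (A B : 'M[R]_(T, dL)) :
  Kadj Kk (A - B) = Kadj Kk A - Kadj Kk B.
Proof. by rewrite !Kadj_Kop KopB. Qed.

Lemma fnorm2_Kadj_le (R : realType) T dL nV dR (Kk : 'I_T -> 'I_nV -> 'M[R]_(dL, dR))
    (CK : R) (H : 'M[R]_(T, dL)) :
  HSnorm Kk <= CK -> fnorm2 (Kadj Kk H) <= CK ^+ 2 * fnorm2 H.
Proof. by rewrite Kadj_Kop -HSnorm_Kadj_kernel; exact: fnorm2_Kop_le. Qed.

Lemma frob_Kadj_le (R : realType) T dL nV dR (Kk : 'I_T -> 'I_nV -> 'M[R]_(dL, dR))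
    (CK mu : R) (H : 'M[R]_(T, dL)) (X : 'M[R]_(nV, dR)) :
  HSnorm Kk <= CK -> 0 < mu ->
  frob (Kadj Kk H) X <= mu / 2 * fnorm2 X + CK ^+ 2 / (2 * mu) * fnorm2 H.
Proof. by rewrite Kadj_Kop -HSnorm_Kadj_kernel; exact: frob_Kop_le. Qed.

Lemma is_derive_mx_coord (R : realFieldType) (V : normedModType R) m n
    (F : V -> 'M[R]_(m, n)) (x v : V) (dF : 'M[R]_(m, n)) i j :
  is_derive x v F dF -> is_derive x v (fun y => F y i j) (dF i j).
Proof.
case=> F_der <-; rewrite derive_mx // mxE.
by apply: DeriveDef => //; exact: (derivable_mxP F x v).1.
Qed.

Lemma is_derive_sum_fun (R : numFieldType) (V W : normedModType R) k
    (h : 'I_k -> V -> W) (x v : V) (dh : 'I_k -> W) :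
  (forall i, is_derive x v (h i) (dh i)) ->
  is_derive x v (fun y => \sum_(i < k) h i y) (\sum_(i < k) dh i).
Proof. by move=> h_der; have := is_derive_sum h_der; rewrite fct_sumE. Qed.

Section MatrixCalculus.
Variables (R : realType) (V : normedModType R) (m n : nat).
Implicit Types F G : V -> 'M[R]_(m, n).

Lemma is_derive_frob F G (x v : V) dF dG :
  is_derive x v F dF -> is_derive x v G dG ->
  is_derive x v (fun y => frob (F y) (G y)) (frob dF (G x) + frob (F x) dG).
Proof.
move=> F_der G_der; rewrite /frob -big_split /=.
apply: is_derive_sum_fun => i; rewrite -big_split /=; apply: is_derive_sum_fun => j.
apply: is_derive_eq.
  exact: is_deriveM (is_derive_mx_coord i j F_der) (is_derive_mx_coord i j G_der).
by rewrite /GRing.scale /=; ring.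
Qed.

Lemma is_derive_fnorm2B F (C : 'M[R]_(m, n)) (x v : V) dF :
  is_derive x v F dF -> is_derive x v (fun y => fnorm2 (F y - C)) (2 * frob dF (F x - C)).
Proof.
move=> F_der; have FC_der := is_deriveB F_der (is_derive_cst C x v).
rewrite subr0 in FC_der.
apply: is_derive_eq; first exact: (is_derive_frob FC_der FC_der).
by rewrite [frob (F x - C) dF]frobC mulr2n mulrDl mul1r.
Qed.

End MatrixCalculus.

Lemma fnorm2_continuous (R : realType) m n : continuous (@fnorm2 R m n).
Proof.
rewrite /fnorm2 /frob.
apply: continuous_big => [|i _]; first exact: add_continuous.
apply: continuous_big => [|j _ M]; first exact: add_continuous.
exact: continuousM (@coord_continuous R m n i j M) (@coord_continuous R m n i j M).
Qed.

Lemma continuous_fnorm2B_within (R : realType) (U : topologicalType) m n (A : set U)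
    (F : U -> 'M[R]_(m, n)) (C : 'M[R]_(m, n)) :
  {within A, continuous F} -> {within A, continuous (fun s => fnorm2 (F s - C))}.
Proof.
move=> F_cont x.
have fnorm2B_cont : continuous (fun M : 'M[R]_(m, n) => fnorm2 (M - C)).
  move=> M; have subC_cont : {for M, continuous (fun N : 'M[R]_(m, n) => N - C)}.
    by apply: (@cvgB _ _ _ (nbhs M)); [exact: cvg_id | exact: cvg_cst].
  exact: (continuous_comp subC_cont (@fnorm2_continuous R m n (M - C))).
exact: (@continuous_comp (subspace A) _ _ F _ x (F_cont x) (fnorm2B_cont _)).
Qed.

Lemma continuous_within_ge_at (R : realType) (U : topologicalType) (f : R -> U) (a x : R) :
  {within [set t | a <= t], continuous f} -> a < x -> {for x, continuous f}.
Proof.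
move=> f_cont ax; have x_int : [set t | a <= t]° x by exact: lt_le_nbhsr ax.
by have := f_cont x; rewrite /continuous_at -(nbhs_subspace_interior x_int).
Qed.

Lemma is_derive_addl (R : numFieldType) (r x : R) : is_derive x (1 : R) (fun s : R => r + s) 1.
Proof.
by have := is_deriveD (is_derive_cst r x 1) (is_derive_id x (1 : R)); rewrite add0r.
Qed.

Lemma is_derive_comp_subr (R : numFieldType) (f : R -> R) (x b df : R) :
  is_derive (x - b) (1 : R) f df -> is_derive x (1 : R) (fun r => f (r - b)) df.
Proof.
move=> [f_der <-].
have quotient_eq :
    (fun h : R => h^-1 *: (((fun r => f (r - b)) \o shift x) (h *: (1 : R)) - f (x - b)))
    = (fun h : R => h^-1 *: ((f \o shift (x - b)) (h *: (1 : R)) - f (x - b))).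
  by apply/funext => h /=; rewrite addrA.
by apply: DeriveDef; [rewrite /derivable quotient_eq | rewrite /derive quotient_eq].
Qed.

Section WindowIntegral.
Variables (R : realType) (g : R -> R) (a : R).
Hypothesis g_cont : {within [set t | a <= t], continuous g}.
Local Notation mu := (@lebesgue_measure R).

Lemma integrable_itv_ge (x y : R) : a <= x -> mu.-integrable `[x, y] (EFin \o g).
Proof.
move=> ax; apply: continuous_compact_integrable; first exact: segment_compact.
apply: continuous_subspaceW g_cont => z /=; rewrite in_itv /= => /andP [xz _].
exact: le_trans ax xz.
Qed.

Lemma Rintegral_window_shift (b r : R) : 0 <= b -> a <= r - b ->
  \int[mu]_(s in `[-b, 0]) g (r + s) = \int[mu]_(x in `[r - b, r]) g x.
Proof.
move=> b0 arb; have Nb_le0 : - b <= 0 by rewrite oppr_le0.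
have := @integration_by_substitution_increasing R (fun s => r + s) g (- b) 0 Nb_le0.
have -> : ((fun s : R => r + s)^`())%classic = cst 1.
  by apply/funext => x; rewrite derive1E; case: (is_derive_addl r x).
rewrite addr0 => substitution; rewrite /Rintegral substitution //.
- by congr fine; apply: eq_integral => x _; rewrite /= mulr1.
- by move=> x y _ _ xy; rewrite ltrD2l.
- by move=> x _; exact: cvg_cst.
- exact: is_cvg_cst.
- exact: is_cvg_cst.
- have addl_cont : continuous (fun s : R => r + s).
    by move=> x; apply: cvgD; [exact: cvg_cst | exact: cvg_id].
  split; first by move=> x _; exact: (@ex_derive _ _ _ _ _ _ _ (is_derive_addl r x)).
    exact: cvg_at_right_filter (addl_cont _).
  exact: cvg_at_left_filter (addl_cont _).
- apply: continuous_subspaceW g_cont => x /=; rewrite in_itv /= => /andP [rbx _].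
  exact: le_trans arb rbx.
Qed.

Lemma is_derive_Rintegral_itv (x : R) : a < x ->
  is_derive x (1 : R) (fun y => \int[mu]_(s in `[a, y]) g s) (g x).
Proof.
move=> ax; have [|||G_der G'_eq] := @continuous_FTC1_closed R g a x (x + 1) _ _ ax _.
- by rewrite ltrDl.
- exact: integrable_itv_ge.
- exact: continuous_within_ge_at g_cont ax.
by apply: DeriveDef => //; rewrite -derive1E G'_eq.
Qed.

Lemma is_derive_window_integral (b t : R) : 0 <= b -> a < t - b ->
  is_derive t (1 : R) (fun r => \int[mu]_(s in `[-b, 0]) g (r + s)) (g t - g (t - b)).
Proof.
move=> b0 atb; pose G y := \int[mu]_(s in `[a, y]) g s.
have G_der : is_derive t (1 : R) (fun r => G r - G (r - b)) (g t - g (t - b)).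
  apply: is_deriveB; last exact/is_derive_comp_subr/is_derive_Rintegral_itv.
  by apply: is_derive_Rintegral_itv; apply: lt_le_trans atb _; rewrite lerBlDr lerDl.
apply: near_eq_is_derive G_der.
have : a + b < t by rewrite -ltrBrDr.
move=> /lt_le_nbhsr; apply: filterS => r abr.
have arb : a <= r - b by rewrite lerBrDr.
rewrite Rintegral_window_shift // /G Rintegral_itvB //.
- rewrite Rintegral_itv_obnd_cbnd //.
  apply: integrableS (integrable_itv_ge r arb) => //.
  by apply: subset_itvScc; rewrite bnd_simp.
- exact: integrable_itv_ge.
- by rewrite bnd_simp lerBlDr lerDl.
Qed.

Lemma window_integral_le (b r M : R) : 0 <= b -> a <= r - b ->
  (forall y, r - b <= y <= r -> g y <= M) ->
  \int[mu]_(s in `[-b, 0]) g (r + s) <= b * M.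
Proof.
move=> b0 arb gM; rewrite Rintegral_window_shift //.
have M_int : mu.-integrable `[r - b, r] (EFin \o cst M).
  apply: continuous_compact_integrable; first exact: segment_compact.
  by apply: continuous_subspaceT => x; exact: cvg_cst.
have g_le_M : \int[mu]_(x in `[r - b, r]) g x <= \int[mu]_(x in `[r - b, r]) cst M x.
  exact: le_Rintegral (integrable_itv_ge r arb) M_int _.
apply: le_trans g_le_M _.
rewrite Rintegral_cst //; change (M * fine (mu `[r - b, r]%classic) <= b * M).
rewrite lebesgue_measure_itv /= lte_fin.
have [b_gt0|b_le0] := ltP 0 b.
  by rewrite ltrBlDr ltrDl b_gt0 -EFinD /= opprB addrC subrK mulrC.
have -> : b = 0 by apply/eqP; rewrite eq_le b_le0 b0.
by rewrite subr0 ltxx /= mulr0 mul0r.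
Qed.

End WindowIntegral.

Lemma MVT_pos_witness (R : realType) (f : R -> R) (Q : R -> R -> Prop) (a b : R) :
  0 < a -> a < b ->
  (forall r : R, 0 < r -> exists2 df : R, is_derive r (1 : R) f df & Q r df) ->
  exists2 c, a < c < b & exists2 df, Q c df & f b - f a = df * (b - a).
Proof.
move=> a0 ab f_der.
have f'Q (r : R) : 0 < r -> is_derive r (1 : R) f ('D_1 f r) /\ Q r ('D_1 f r).
  by move=> r0; have [df [f_der_r <-] Qdf] := f_der r r0; split => //; exact: DeriveDef.
have pos_ab (x : R) : x \in `]a, b[ -> 0 < x.
  by rewrite in_itv /= => /andP [ax _]; exact: lt_trans a0 ax.
have f_cont : {within `[a, b], continuous f}.
  apply: derivable_within_continuous => x; rewrite in_itv /= => /andP [ax _].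
  by have [df [] ] := f_der x (lt_le_trans a0 ax).
have [c cab f_ba] := MVT ab (fun x xab => (f'Q x (pos_ab x xab)).1) f_cont.
exists c; first by move: cab; rewrite in_itv.
by exists ('D_1 f c); first exact: (f'Q c (pos_ab c cab)).2.
Qed.

Section Barbalat.
Variables (R : realType) (V D : R -> R) (al L : R).
Hypothesis al_gt0 : 0 < al.
Hypothesis V_der :
  forall r : R, 0 < r -> exists2 dV : R, is_derive r (1 : R) V dV & dV <= - al * D r.
Hypothesis D_ge0 : forall r : R, 0 < r -> 0 <= D r.

Lemma lyapunov_decrease_le (a b c : R) : 0 < a -> a <= b ->
  (forall s, a <= s <= b -> c <= D s) -> V b - V a <= - (al * c) * (b - a).
Proof.
move=> a0; rewrite le_eqVlt => /predU1P [<- _|ab cD]; first by rewrite !subrr mulr0.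
have [x /andP [ax xb] [dV dV_le ->]] := MVT_pos_witness a0 ab V_der.
have alc_le : al * c <= al * D x by rewrite ler_pM2l //; apply: cD; rewrite !ltW.
have ba0 : 0 < b - a by rewrite subr_gt0.
rewrite mulNr -mulNr; apply: le_trans (_ : - al * D x * (b - a) <= _).
  by rewrite ler_pM2r.
by rewrite ler_pM2r // mulNr lerN2.
Qed.

Lemma lyapunov_nonincreasing (a b : R) : 0 < a -> a <= b -> V b <= V a.
Proof.
move=> a0 ab; rewrite -subr_le0; apply: le_trans (lyapunov_decrease_le a0 ab _) _.
  by move=> s /andP [a_s _]; apply: D_ge0; exact: lt_le_trans a0 a_s.
by rewrite mulr0 oppr0 mul0r.
Qed.

Hypothesis V_ge0 : forall r : R, 0 < r -> 0 <= V r.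
Hypothesis L_gt0 : 0 < L.
Hypothesis D_der :
  forall r : R, 0 < r -> exists2 dD : R, is_derive r (1 : R) D dD & - L <= dD.

Lemma dissipation_lower_bound (a b : R) : 0 < a -> a <= b -> D a - L * (b - a) <= D b.
Proof.
move=> a0; rewrite le_eqVlt => /predU1P [<-|ab]; first by rewrite subrr mulr0 subr0.
have [x _ [dD dD_ge D_ba]] := MVT_pos_witness a0 ab D_der.
have : 0 < b - a by rewrite subr_gt0.
nra.
Qed.

(* If [D t >= e] at a late time [t], then [D >= e/2] on a window of fixed length
   after [t], over which [V] drops by a fixed amount: impossible once [V] is
   within that amount of its infimum. *)
Lemma dissipation_cvg0 : D r @[r --> +oo] --> 0.
Proof.
apply/cvgrPdist_lt => e e0.
have V_inf : has_inf [set V r | r in [set r : R | 0 < r]].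
  by split; [exists (V 1), 1; rewrite /= ?ltr01 | exists 0 => _ [r r0 <-]; exact: V_ge0].
set w := e / (2 * L).
have w0 : 0 < w by rewrite divr_gt0 // mulr_gt0.
set drop := al * (e / 2) * w.
have drop0 : 0 < drop by apply: mulr_gt0 => //; apply: mulr_gt0 => //; exact: divr_gt0.
have [_ [T0 T00 <-] VT0] := inf_adherent drop0 V_inf.
exists T0; split; first exact: num_real.
move=> t tT0; rewrite sub0r normrN ltNge; apply/negP => eDt.
have t0 : 0 < t by exact: lt_trans T00 tT0.
rewrite ger0_norm ?D_ge0 // in eDt.
have eD : forall s, t <= s <= t + w -> e / 2 <= D s.
  move=> s /andP [ts stw]; have := dissipation_lower_bound t0 ts.
  have : L * (s - t) <= L * w by rewrite ler_pM2l // lerBlDl.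
  have : L * w = e / 2 by rewrite /w; field; rewrite gt_eqF.
  lra.
have := lyapunov_decrease_le t0 (ler_wpDr (ltW w0) (lexx t)) eD.
have := lyapunov_nonincreasing T00 (ltW tT0).
have : inf [set V r | r in [set r : R | 0 < r]] <= V (t + w).
  apply: ge_inf; first by case: V_inf.
  by exists (t + w) => //; exact: addr_gt0.
rewrite addrAC subrr add0r /drop in VT0 *; lra.
Qed.

End Barbalat.

Lemma le_min3_comb (R : realDomainType) (a b c x y z : R) :
  0 <= x -> 0 <= y -> 0 <= z ->
  - a * x - b * y - c * z <= - Num.min a (Num.min b c) * (x + y + z).
Proof.
move=> x0 y0 z0.
have : Num.min a (Num.min b c) <= a by rewrite ge_min lexx.
have : Num.min a (Num.min b c) <= b by rewrite !ge_min lexx orbT.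
have : Num.min a (Num.min b c) <= c by rewrite !ge_min lexx !orbT.
nra.
Qed.

Lemma in_balls_sqdist_le (R : realType) T dL nV dR nP
    (cL : 'M[R]_(T, dL)) (rL : R) (cR : 'M[R]_(nV, dR)) (rR : R) (cP : 'cV[R]_nP) (rP : R)
    H X P Hs Xs Ps :
  in_balls cL rL cR rR cP rP H X P -> in_balls cL rL cR rR cP rP Hs Xs Ps ->
  fnorm2 (H - Hs) + fnorm2 (X - Xs) + fnorm2 (P - Ps) <= 4 * (rL ^+ 2 + rR ^+ 2 + rP ^+ 2).
Proof.
move=> [HL XR PP] [HsL XsR PsP].
have := fnorm2B_ball_le HL HsL; have := fnorm2B_ball_le XR XsR.
have := fnorm2B_ball_le PP PsP; lra.
Qed.

Section PrincipalSystem.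
Variables (R : realType) (T dL nV dR nP : nat).
Variables (AL : 'M[R]_(T, dL) -> 'M[R]_(T, dL)) (AR : 'M[R]_(nV, dR) -> 'M[R]_(nV, dR)).
Variables (AP : 'cV[R]_nP -> 'cV[R]_nP) (Kk : 'I_T -> 'I_nV -> 'M[R]_(dL, dR)).
Variables (CK muL muR muP tauRL tauLR : R).
Variables (Hs : 'M[R]_(T, dL)) (Xs : 'M[R]_(nV, dR)) (Ps : 'cV[R]_nP).
Hypotheses (tauRL_ge0 : 0 <= tauRL) (tauLR_ge0 : 0 <= tauLR).
Hypothesis Kk_le : HSnorm Kk <= CK.
Hypotheses (muL_gt0 : 0 < muL) (muR_gt0 : 0 < muR) (muP_gt0 : 0 < muP).
Hypotheses (AL_diss : one_sided_dissipative AL muL) (AR_diss : one_sided_dissipative AR muR).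
Hypothesis AP_diss : one_sided_dissipative AP muP.
Hypotheses (Hs_eq : AL Hs + Kop Kk Xs = 0) (Xs_eq : AR Xs + Kadj Kk Hs = 0).
Hypothesis Ps_eq : AP Ps = 0.

Local Notation gainL := (CK ^+ 2 / (2 * muL)).
Local Notation gainR := (CK ^+ 2 / (2 * muR)).

Lemma gainL_ge0 : 0 <= gainL.
Proof. by rewrite divr_ge0 ?sqr_ge0 // mulr_ge0 // ltW. Qed.

Lemma gainR_ge0 : 0 <= gainR.
Proof. by rewrite divr_ge0 ?sqr_ge0 // mulr_ge0 // ltW. Qed.

Lemma fieldL_centered (H : 'M[R]_(T, dL)) (X : 'M[R]_(nV, dR)) :
  AL H + Kop Kk X = (AL H - AL Hs) + Kop Kk (X - Xs).
Proof. by rewrite KopB addrACA -opprD Hs_eq subr0. Qed.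

Lemma fieldR_centered (X : 'M[R]_(nV, dR)) (H : 'M[R]_(T, dL)) :
  AR X + Kadj Kk H = (AR X - AR Xs) + Kadj Kk (H - Hs).
Proof. by rewrite KadjB addrACA -opprD Xs_eq subr0. Qed.

Lemma fieldL_le (H : 'M[R]_(T, dL)) (X : 'M[R]_(nV, dR)) :
  frob (AL H + Kop Kk X) (H - Hs) <= - (muL / 2) * fnorm2 (H - Hs) + gainL * fnorm2 (X - Xs).
Proof.
rewrite fieldL_centered frobDl; have := AL_diss H Hs.
have := frob_Kop_le (X - Xs) (H - Hs) Kk_le muL_gt0; lra.
Qed.

Lemma fieldR_le (X : 'M[R]_(nV, dR)) (H : 'M[R]_(T, dL)) :
  frob (AR X + Kadj Kk H) (X - Xs) <= - (muR / 2) * fnorm2 (X - Xs) + gainR * fnorm2 (H - Hs).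
Proof.
rewrite fieldR_centered frobDl; have := AR_diss X Xs.
have := frob_Kadj_le (H - Hs) (X - Xs) Kk_le muR_gt0; lra.
Qed.

Lemma fieldP_le (P : 'cV[R]_nP) : frob (AP P) (P - Ps) <= - muP * fnorm2 (P - Ps).
Proof. by have := AP_diss P Ps; rewrite Ps_eq subr0. Qed.

Lemma fieldL_fnorm2_le (LL : R) (H : 'M[R]_(T, dL)) (X : 'M[R]_(nV, dR)) :
  (forall u v, fnorm2 (AL u - AL v) <= LL * fnorm2 (u - v)) ->
  fnorm2 (AL H + Kop Kk X) <= 2 * LL * fnorm2 (H - Hs) + 2 * CK ^+ 2 * fnorm2 (X - Xs).
Proof.
move=> AL_lip; rewrite fieldL_centered; apply: le_trans (fnorm2D_le _ _) _.
by have := AL_lip H Hs; have := fnorm2_Kop_le (X - Xs) Kk_le; lra.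
Qed.

Lemma fieldR_fnorm2_le (LR : R) (X : 'M[R]_(nV, dR)) (H : 'M[R]_(T, dL)) :
  (forall u v, fnorm2 (AR u - AR v) <= LR * fnorm2 (u - v)) ->
  fnorm2 (AR X + Kadj Kk H) <= 2 * LR * fnorm2 (X - Xs) + 2 * CK ^+ 2 * fnorm2 (H - Hs).
Proof.
move=> AR_lip; rewrite fieldR_centered; apply: le_trans (fnorm2D_le _ _) _.
by have := AR_lip X Xs; have := fnorm2_Kadj_le (H - Hs) Kk_le; lra.
Qed.

Hypothesis small_gain : CK ^+ 2 < muL * muR.

Lemma alphaL_gt0 : 0 < muL / 2 - gainR.
Proof.
rewrite subr_gt0 ltr_pdivrMr ?mulr_gt0 //.
by have -> : muL / 2 * (2 * muR) = muL * muR by field.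
Qed.

Lemma alphaR_gt0 : 0 < muR / 2 - gainL.
Proof.
rewrite subr_gt0 ltr_pdivrMr ?mulr_gt0 //.
by have -> : muR / 2 * (2 * muL) = muL * muR by field.
Qed.

Lemma equilibrium_unique H X P :
  AL H + Kop Kk X = 0 -> AR X + Kadj Kk H = 0 -> AP P = 0 -> [/\ H = Hs, X = Xs & P = Ps].
Proof.
move=> H_eq X_eq P_eq.
have := fieldL_le H X; have := fieldR_le X H; have := fieldP_le P.
rewrite H_eq X_eq P_eq !frob0l => P_le X_le H_le.
have aH0 := mulr_ge0 (ltW alphaL_gt0) (fnorm2_ge0 (H - Hs)).
have aX0 := mulr_ge0 (ltW alphaR_gt0) (fnorm2_ge0 (X - Xs)).
have aH_le0 : (muL / 2 - gainR) * fnorm2 (H - Hs) <= 0 by lra.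
have aX_le0 : (muR / 2 - gainL) * fnorm2 (X - Xs) <= 0 by lra.
rewrite pmulr_rle0 ?alphaL_gt0 // in aH_le0; rewrite pmulr_rle0 ?alphaR_gt0 // in aX_le0.
rewrite mulNr oppr_ge0 pmulr_rle0 // in P_le.
by split; apply: fnorm2B_le0_eq.
Qed.

Local Notation tau := (Num.max tauRL tauLR).
Local Notation solution := (is_solution AL AR AP Kk tauRL tauLR).
Local Notation mu := (@lebesgue_measure R).

Definition sqdist (H : R -> 'M[R]_(T, dL)) (X : R -> 'M[R]_(nV, dR)) (P : R -> 'cV[R]_nP)
  (r : R) : R := fnorm2 (H r - Hs) + fnorm2 (X r - Xs) + fnorm2 (P r - Ps).

Definition LK (H : R -> 'M[R]_(T, dL)) (X : R -> 'M[R]_(nV, dR)) (P : R -> 'cV[R]_nP) :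
  R -> R := fun r => LKfun CK muL muR tauRL tauLR
  (fun s => H (r + s) - Hs) (fun s => X (r + s) - Xs) (fun s => P (r + s) - Ps).

Lemma sqdist_ge0 H X P r : 0 <= sqdist H X P r.
Proof. by rewrite !addr_ge0 ?fnorm2_ge0. Qed.

Lemma LK_shiftE H X P r : LK H X P r = 2^-1 * sqdist H X P r
  + gainL * \int[mu]_(s in `[- tauRL, 0]) fnorm2 (X (r + s) - Xs)
  + gainR * \int[mu]_(s in `[- tauLR, 0]) fnorm2 (H (r + s) - Hs).
Proof. by rewrite /LK /LKfun !addr0 !mulrDr. Qed.

Lemma LK_ge H X P r : 2^-1 * sqdist H X P r <= LK H X P r.
Proof.
rewrite LK_shiftE -addrA lerDl addr_ge0 // mulr_ge0 ?gainL_ge0 ?gainR_ge0 //;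
  by apply: Rintegral_ge0 => s _; exact: fnorm2_ge0.
Qed.

Lemma tau_ge_RL : tauRL <= tau. Proof. by rewrite le_max lexx. Qed.
Lemma tau_ge_LR : tauLR <= tau. Proof. by rewrite le_max lexx orbT. Qed.

Lemma Ntau_le (s : R) : 0 <= s -> - tau <= s.
Proof. by move=> s0; rewrite (le_trans _ s0) // oppr_le0 (le_trans tauRL_ge0 tau_ge_RL). Qed.

Lemma is_derive_sqdist H X P : solution H X P -> forall r : R, 0 < r ->
  is_derive r (1 : R) (sqdist H X P)
    (2 * frob (AL (H r) + Kop Kk (X (r - tauRL))) (H r - Hs)
     + 2 * frob (AR (X r) + Kadj Kk (H (r - tauLR))) (X r - Xs)
     + 2 * frob (AP (P r)) (P r - Ps)).
Proof.
case=> _ _ _ sol r r0; have [H_der X_der P_der] := sol r r0.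
exact: is_deriveD (is_deriveD (is_derive_fnorm2B Hs H_der) (is_derive_fnorm2B Xs X_der))
  (is_derive_fnorm2B Ps P_der).
Qed.

Lemma LK_dissipation H X P : solution H X P -> forall t : R, 0 < t ->
  exists2 dV, is_derive t (1 : R) (LK H X P) dV &
    dV <= - (muL / 2 - gainR) * fnorm2 (H t - Hs) - (muR / 2 - gainL) * fnorm2 (X t - Xs)
          - muP * fnorm2 (P t - Ps).
Proof.
move=> sol t t0; have [H_cont X_cont _ _] := sol.
have lt_RL : - tau < t - tauRL by have := tau_ge_RL; lra.
have lt_LR : - tau < t - tauLR by have := tau_ge_LR; lra.
have IX := is_derive_window_integral
  (continuous_fnorm2B_within (C := Xs) X_cont) tauRL_ge0 lt_RL.
have IH := is_derive_window_integral
  (continuous_fnorm2B_within (C := Hs) H_cont) tauLR_ge0 lt_LR.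
rewrite (funext (LK_shiftE H X P)); eexists.
  exact: is_deriveD (is_deriveD (is_deriveZ (2^-1) (is_derive_sqdist sol t0))
    (is_deriveZ gainL IX)) (is_deriveZ gainR IH).
rewrite /GRing.scale /=.
have := fieldL_le (H t) (X (t - tauRL)); have := fieldR_le (X t) (H (t - tauLR)).
have := fieldP_le (P t); lra.
Qed.

Local Notation rate := (Num.min (muL / 2 - gainR) (Num.min (muR / 2 - gainL) muP)).

Lemma rate_gt0 : 0 < rate.
Proof. by rewrite !lt_min alphaL_gt0 alphaR_gt0 muP_gt0. Qed.

Lemma LK_decay H X P : solution H X P -> forall r : R, 0 < r ->
  exists2 dV, is_derive r (1 : R) (LK H X P) dV & dV <= - rate * sqdist H X P r.
Proof.
move=> sol r r0; have [dV LK_der dV_le] := LK_dissipation sol r0.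
by exists dV => //; apply: le_trans dV_le (le_min3_comb _ _ _ _ _ _); exact: fnorm2_ge0.
Qed.

Lemma LK_le H X P (r M : R) : solution H X P -> 0 <= r ->
  (forall s, r - tau <= s <= r -> sqdist H X P s <= M) ->
  LK H X P r <= 2^-1 * sqdist H X P r + (gainL * tauRL + gainR * tauLR) * M.
Proof.
move=> [H_cont X_cont _ _] r0 sqdist_le.
have := tau_ge_RL; have := tau_ge_LR => le_LR le_RL.
have within_window (b : R) s : b <= tau -> r - b <= s <= r -> r - tau <= s <= r.
  by move=> b_le /andP [bs ->]; rewrite andbT (le_trans _ bs) // lerB.
have IX : \int[mu]_(s in `[- tauRL, 0]) fnorm2 (X (r + s) - Xs) <= tauRL * M.
  apply: (window_integral_le (continuous_fnorm2B_within (C := Xs) X_cont)) => //.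
    by rewrite lerBrDr; lra.
  move=> y /(within_window _ _ le_RL) /sqdist_le; rewrite /sqdist.
  by have := fnorm2_ge0 (H y - Hs); have := fnorm2_ge0 (P y - Ps); lra.
have IH : \int[mu]_(s in `[- tauLR, 0]) fnorm2 (H (r + s) - Hs) <= tauLR * M.
  apply: (window_integral_le (continuous_fnorm2B_within (C := Hs) H_cont)) => //.
    by rewrite lerBrDr; lra.
  move=> y /(within_window _ _ le_LR) /sqdist_le; rewrite /sqdist.
  by have := fnorm2_ge0 (X y - Xs); have := fnorm2_ge0 (P y - Ps); lra.
have := ler_wpM2l gainL_ge0 IX; have := ler_wpM2l gainR_ge0 IH.
rewrite LK_shiftE; lra.
Qed.

Lemma sqdist_continuous H X P : solution H X P ->
  {within [set s | - tau <= s], continuous (sqdist H X P)}.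
Proof.
move=> [H_cont X_cont P_cont _]; apply/subspace_continuousP => x x_ge.
have /subspace_continuousP cH := continuous_fnorm2B_within (C := Hs) H_cont.
have /subspace_continuousP cX := continuous_fnorm2B_within (C := Xs) X_cont.
have /subspace_continuousP cP := continuous_fnorm2B_within (C := Ps) P_cont.
by apply: cvgD; first apply: cvgD; [exact: cH | exact: cX | exact: cP].
Qed.

Lemma sqdist_lt_near0 H X P (d t : R) : solution H X P ->
  (forall s, - tau <= s <= 0 -> sqdist H X P s < d) -> 0 < t ->
  exists2 ep, 0 < ep <= t & forall s, - tau <= s <= ep -> sqdist H X P s < d.
Proof.
move=> sol hist t0.
have tau_le0 := Ntau_le (lexx 0).
have /subspace_continuousP sq_cont := sqdist_continuous sol.
have [e e0 near0] : exists2 e : R, 0 < e &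
    forall s, - tau <= s -> `|s| < e -> sqdist H X P s < d.
  have := sq_cont 0 tau_le0 _ (lt_nbhsl (hist 0 _)); rewrite tau_le0 lexx => /(_ isT).
  move=> /nbhs_ballP [e /= e0 near0]; exists e => // s tau_s se.
  by apply: near0 tau_s; rewrite /ball /= sub0r normrN.
exists (Num.min (e / 2) t); first by rewrite lt_min divr_gt0 // t0 ge_min lexx orbT.
move=> s /andP [tau_s s_le]; have [s_le0|s_gt0] := leP s 0; first by rewrite hist ?tau_s.
apply: near0 tau_s _; rewrite ger0_norm ?ltW //; apply: le_lt_trans s_le _.
by rewrite gt_min ltr_pdivrMr // ltr_pMr // ltr1n.
Qed.

Lemma sqdist_stable (eps : R) : 0 < eps -> exists2 delta, 0 < delta &
  forall H X P, solution H X P -> (forall s, - tau <= s <= 0 -> sqdist H X P s < delta) ->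
  forall t, 0 <= t -> sqdist H X P t < eps.
Proof.
move=> eps0; set c := gainL * tauRL + gainR * tauLR.
have c0 : 0 <= c by rewrite addr_ge0 // mulr_ge0 ?gainL_ge0 ?gainR_ge0.
have c1_gt0 : 0 < 1 + 2 * c by rewrite ltr_pwDl // mulr_ge0.
set delta := eps / (1 + 2 * c).
have delta_eq : (1 + 2 * c) * delta = eps by rewrite /delta; field; rewrite gt_eqF.
have delta0 : 0 < delta by rewrite divr_gt0.
exists delta => // H X P sol hist t; rewrite le_eqVlt => /predU1P [<-|t0].
  have := hist 0; rewrite lexx Ntau_le // => /(_ isT).
  have := mulr_ge0 c0 (ltW delta0); lra.
have [ep /andP [ep0 ep_le] near0] := sqdist_lt_near0 sol hist t0.
have tau_ep := Ntau_le (ltW ep0).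
have := LK_ge H X P t.
have := lyapunov_nonincreasing rate_gt0 (LK_decay sol) (fun r _ => sqdist_ge0 H X P r)
  ep0 ep_le.
have := @LK_le H X P ep delta sol (ltW ep0).
have := near0 ep; rewrite tau_ep lexx => /(_ isT) sq_ep.
have window (s : R) : ep - tau <= s <= ep -> - tau <= s <= ep.
  by case/andP => eps_s ->; rewrite andbT; apply: le_trans eps_s; lra.
have : forall s, ep - tau <= s <= ep -> sqdist H X P s <= delta.
  by move=> s /window /near0 /ltW.
move=> /[swap] /[apply]; move: delta_eq; rewrite /c; lra.
Qed.

Lemma equilibrium_stable (eps : R) : 0 < eps -> exists2 delta, 0 < delta &
  forall H X P, solution H X P ->
    (forall s, - tau <= s <= 0 -> dist3 (H s) Hs (X s) Xs (P s) Ps < delta) ->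
    forall t, 0 <= t -> dist3 (H t) Hs (X t) Xs (P t) Ps < eps.
Proof.
move=> eps0; have [d d0 sq_stable] := sqdist_stable (exprn_gt0 2 eps0).
exists (Num.sqrt d); first by rewrite sqrtr_gt0.
move=> H X P sol hist t t0; rewrite /dist3 -(ger0_norm (ltW eps0)) -sqrtr_sqr.
rewrite ltr_sqrt ?exprn_gt0 //; apply: sq_stable sol _ t t0 => s /hist.
by rewrite /dist3 ltr_sqrt.
Qed.

Lemma sqdist_derive_ge H X P (M : R) :
  lipschitz_map AL -> lipschitz_map AR -> lipschitz_map AP -> solution H X P ->
  (forall s, - tau <= s -> sqdist H X P s <= M) ->
  exists2 Lb, 0 < Lb & forall r : R, 0 < r ->
    exists2 dD, is_derive r (1 : R) (sqdist H X P) dD & - Lb <= dD.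
Proof.
move=> /lipschitz_map_fnorm2 [LL LL0 AL_lip] /lipschitz_map_fnorm2 [LR LR0 AR_lip].
move=> /lipschitz_map_fnorm2 [LP LP0 AP_lip] sol sq_le.
have M0 : 0 <= M := le_trans (sqdist_ge0 H X P 0) (sq_le 0 (Ntau_le (lexx 0))).
have block_le s : - tau <= s ->
    [/\ fnorm2 (H s - Hs) <= M, fnorm2 (X s - Xs) <= M & fnorm2 (P s - Ps) <= M].
  move=> /sq_le; rewrite /sqdist.
  have := fnorm2_ge0 (H s - Hs); have := fnorm2_ge0 (X s - Xs).
  have := fnorm2_ge0 (P s - Ps); split; lra.
exists ((2 * LL + 2 * LR + LP + 4 * CK ^+ 2 + 3) * M + 1).
  by rewrite ltr_pwDr // mulr_ge0 //; have := sqr_ge0 CK; lra.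
move=> r r0; have sq_der := is_derive_sqdist sol r0; eexists; first exact: sq_der.
have [lt_RL lt_LR] : - tau <= r - tauRL /\ - tau <= r - tauLR.
  by have := tau_ge_RL; have := tau_ge_LR; split; lra.
have [Hr Xr Pr] := block_le r (Ntau_le (ltW r0)).
have [_ XrRL _] := block_le _ lt_RL; have [HrLR _ _] := block_le _ lt_LR.
have := fieldL_fnorm2_le (H r) (X (r - tauRL)) AL_lip.
have := fieldR_fnorm2_le (X r) (H (r - tauLR)) AR_lip.
have := AP_lip (P r) Ps; rewrite Ps_eq subr0.
have := ler_wpM2l (sqr_ge0 CK) XrRL; have := ler_wpM2l (sqr_ge0 CK) HrLR.
have := ler_wpM2l LL0 Hr; have := ler_wpM2l LR0 Xr; have := ler_wpM2l LP0 Pr.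
have := frob_ge (AL (H r) + Kop Kk (X (r - tauRL))) (H r - Hs).
have := frob_ge (AR (X r) + Kadj Kk (H (r - tauLR))) (X r - Xs).
have := frob_ge (AP (P r)) (P r - Ps); lra.
Qed.

Lemma equilibrium_attractive H X P (M : R) :
  lipschitz_map AL -> lipschitz_map AR -> lipschitz_map AP -> solution H X P ->
  (forall s, - tau <= s -> sqdist H X P s <= M) ->
  dist3 (H t) Hs (X t) Xs (P t) Ps @[t --> +oo] --> 0.
Proof.
move=> lipL lipR lipP sol sq_le.
have [Lb Lb0 sq_der] := sqdist_derive_ge lipL lipR lipP sol sq_le.
have LK_ge0 (r : R) : 0 < r -> 0 <= LK H X P r.
  move=> _; apply: le_trans (LK_ge H X P r).
  by rewrite mulr_ge0 ?invr_ge0 ?sqdist_ge0.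
have sq_cvg0 := dissipation_cvg0 rate_gt0 (LK_decay sol) (fun r _ => sqdist_ge0 H X P r)
  LK_ge0 Lb0 sq_der.
by move: sq_cvg0 => /cvg_comp /(_ (@sqrt_continuous R 0)); rewrite sqrtr0.
Qed.

End PrincipalSystem.

Theorem theorem3p6 (R : realType) (T dL nV dR nP : nat)
  (AL : 'M[R]_(T, dL) -> 'M[R]_(T, dL)) (AR : 'M[R]_(nV, dR) -> 'M[R]_(nV, dR))
  (AP : 'cV[R]_nP -> 'cV[R]_nP) (Kk : 'I_T -> 'I_nV -> 'M[R]_(dL, dR))
  (CK muL muR muP tauRL tauLR : R)
  (cL : 'M[R]_(T, dL)) (rL : R) (cR : 'M[R]_(nV, dR)) (rR : R)
  (cP : 'cV[R]_nP) (rP : R)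
  (Hs : 'M[R]_(T, dL)) (Xs : 'M[R]_(nV, dR)) (Ps : 'cV[R]_nP) :
  0 <= tauRL -> 0 <= tauLR ->
  HSnorm Kk <= CK ->
  lipschitz_map AL -> lipschitz_map AR -> lipschitz_map AP ->
  0 < muL -> 0 < muR -> 0 < muP ->
  one_sided_dissipative AL muL -> one_sided_dissipative AR muR ->
  one_sided_dissipative AP muP ->
  0 <= rL -> 0 <= rR -> 0 <= rP ->
  (* S is positively invariant *)
  (forall H X P, is_solution AL AR AP Kk tauRL tauLR H X P ->
     (forall s : R, - Num.max tauRL tauLR <= s <= 0 -> in_balls cL rL cR rR cP rP (H s) (X s) (P s)) ->
     forall t : R, 0 <= t -> in_balls cL rL cR rR cP rP (H t) (X t) (P t)) ->
  (* (Hs, Xs, Ps) is an equilibrium lying in S *)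
  in_balls cL rL cR rR cP rP Hs Xs Ps ->
  AL Hs + Kop Kk Xs = 0 -> AR Xs + Kadj Kk Hs = 0 -> AP Ps = 0 ->
  (* small-gain condition *)
  CK ^+ 2 < muL * muR ->
  let alphaL := muL / 2 - CK ^+ 2 / (2 * muR) in
  let alphaR := muR / 2 - CK ^+ 2 / (2 * muL) in
  let tau := Num.max tauRL tauLR in
  let admissible H X P :=
    is_solution AL AR AP Kk tauRL tauLR H X P /\
    (forall s : R, - tau <= s <= 0 -> in_balls cL rL cR rR cP rP (H s) (X s) (P s)) in
  [/\ (* uniqueness of the equilibrium in S *)
      (forall H X P, in_balls cL rL cR rR cP rP H X P ->
         AL H + Kop Kk X = 0 -> AR X + Kadj Kk H = 0 -> AP P = 0 ->
         [/\ H = Hs, X = Xs & P = Ps]),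
      (* Lyapunov stability *)
      (forall eps, 0 < eps -> exists2 delta, 0 < delta &
         forall H X P, admissible H X P ->
           (forall s : R, - tau <= s <= 0 -> dist3 (H s) Hs (X s) Xs (P s) Ps < delta) ->
           forall t : R, 0 <= t -> dist3 (H t) Hs (X t) Xs (P t) Ps < eps),
      (* global attractivity *)
      (forall H X P, admissible H X P ->
         dist3 (H t) Hs (X t) Xs (P t) Ps @[t --> (+oo : set_system R)] --> 0),
      (* positivity of the decay rates *)
      0 < alphaL /\ 0 < alphaR &
      (* dissipation inequality for the Lyapunov-Krasovskii functional *)
      forall H X P, admissible H X P -> forall t : R, 0 < t ->
        exists2 dV,
          is_derive t (1 : R)
            (fun r => LKfun CK muL muR tauRL tauLR
               (fun s => H (r + s) - Hs) (fun s => X (r + s) - Xs)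
               (fun s => P (r + s) - Ps)) dV &
          dV <= - alphaL * fnorm2 (H t - Hs) - alphaR * fnorm2 (X t - Xs)
                - muP * fnorm2 (P t - Ps)].
Proof.
move=> tRL0 tLR0 Kk_le lipL lipR lipP muL0 muR0 muP0 dsL dsR dsP _ _ _ inv eq_in eqL eqR eqP sg.
move=> alphaL alphaR tau adm; split.
- by move=> H X P _; exact: (equilibrium_unique Kk_le muL0 muR0 muP0 dsL dsR dsP eqL eqR eqP sg).
- move=> eps /(equilibrium_stable tRL0 tLR0 Kk_le muL0 muR0 muP0 dsL dsR dsP eqL eqR eqP sg).
  by case=> delta delta0 stable; exists delta => // H X P [sol _]; exact: stable.
- move=> H X P [sol hist].
  apply: (equilibrium_attractive tRL0 tLR0 Kk_le muL0 muR0 muP0 dsL dsR dsP eqL eqR eqP sg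
    lipL lipR lipP sol (M := 4 * (rL ^+ 2 + rR ^+ 2 + rP ^+ 2))) => s tau_s.
  apply: in_balls_sqdist_le eq_in; have [s_le0|s_gt0] := leP s 0.
    by apply: hist; rewrite tau_s s_le0.
  exact: inv (ltW s_gt0).
- by split; [exact: (alphaL_gt0 muR0 sg) | exact: (alphaR_gt0 muL0 sg)].
- move=> H X P [sol _].
  exact: (LK_dissipation tRL0 tLR0 Kk_le muL0 muR0 dsL dsR dsP eqL eqR eqP sol).
Qed.
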